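(* Let $X$ be a Banach lattice and $S$ a convex $C_0$-semigroup on $X$. Let $x\in X$ with $\sup_{h\in(0,h_0]}\big\|\frac{S(h)x-x}{h}\big\|<\infty$ for some $h_0>0$. Then the map $[0,\infty)\to X$, $t\mapsto S(t)x$ is locally Lipschitz continuous, i.e. for every $T>0$ there exists $L_T\ge0$ with $\|S(t)x-S(s)x\|\le L_T|t-s|$ for all $s,t\in[0,T]$.
   Context: An operator $T\colon X\to X$ is convex if $T(\lambda x+(1-\lambda)y)\le\lambda Tx+(1-\lambda)Ty$ for all $x,y\in X$, $\lambda\in[0,1]$, and bounded if $\sup_{\|x\|\le r}\|Tx\|<\infty$ for all $r>0$. A convex $C_0$-semigroup is a family $(S(t))_{t\ge0}$ of bounded convex operators $X\to X$ with $S(0)=\mathrm{id}$, $S(t+s)=S(t)S(s)$ for all $s,t\ge0$, and $S(t)x\to x$ as $t\downarrow0$ for all $x$. *)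

From HB Require Import structures.
From mathcomp Require Import all_boot all_order all_algebra.
From mathcomp Require Import all_classical all_reals all_analysis.
Set Implicit Arguments. Unset Strict Implicit. Unset Printing Implicit Defensive.
Import Order.TTheory GRing.Theory Num.Theory.
Import numFieldNormedType.Exports.
Local Open Scope ring_scope.
Local Open Scope classical_set_scope.

Record banach_lattice (R : realType) (X : completeNormedModType R) := {
  bl_le : X -> X -> Prop;
  bl_join : X -> X -> X;
  bl_le_refl : forall x, bl_le x x;
  bl_le_trans : forall x y z, bl_le x y -> bl_le y z -> bl_le x z;
  bl_le_anti : forall x y, bl_le x y -> bl_le y x -> x = y;
  bl_join_ubl : forall x y, bl_le x (bl_join x y);
  bl_join_ubr : forall x y, bl_le y (bl_join x y);
  bl_join_lub : forall x y z, bl_le x z -> bl_le y z -> bl_le (bl_join x y) z;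
  bl_le_add : forall x y z, bl_le x y -> bl_le (x + z) (y + z);
  bl_le_scale : forall (a : R) x y, 0 <= a -> bl_le x y -> bl_le (a *: x) (a *: y);
  bl_norm_mono : forall x y,
    bl_le (bl_join x (- x)) (bl_join y (- y)) -> `|x| <= `|y|
}.

Definition convex_op (R : realType) (X : completeNormedModType R)
  (BL : banach_lattice X) (T : X -> X) : Prop :=
  forall (x y : X) (l : R), 0 <= l <= 1 ->
    bl_le BL (T (l *: x + (1 - l) *: y)) (l *: T x + (1 - l) *: T y).

Definition bounded_op (R : realType) (X : completeNormedModType R)
  (T : X -> X) : Prop :=
  forall r : R, 0 < r -> exists M : R, forall x : X, `|x| <= r -> `|T x| <= M.

(* convex C_0-semigroup; S t only matters for t >= 0 *)
Definition convex_C0_semigroup (R : realType) (X : completeNormedModType R)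
  (BL : banach_lattice X) (S : R -> X -> X) : Prop :=
  [/\ (forall t, 0 <= t -> convex_op BL (S t) /\ bounded_op (S t)),
      (forall x, S 0 x = x),
      (forall t s x, 0 <= t -> 0 <= s -> S (t + s) x = S t (S s x)) &
      (forall x, S t x @[t --> 0^'+] --> x)].

(* A convex operator bounded near a point is Lipschitz on a smaller ball around
   it: in a Banach lattice [-v <= T y1 - T y2 <= u] gives
   [||T y1 - T y2|| <= ||u|| + ||v||], and convexity provides such [u], [v] of
   size proportional to [||y1 - y2||].  By Baire's theorem a pointwise bounded
   family of bounded convex operators is uniformly bounded near every point.
   Applied to [S(t_n)] with [t_n -> 0], which is pointwise bounded by strong
   continuity, this bounds [S] on [[0, d] x B(x, rho)], and the semigroup law
   extends the bound to [[0, T] x B(x, rho)]; so the [S(t)], [t <= T], are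
   uniformly Lipschitz near [x].  Finally
   [||S(t)x - S(s)x|| = ||S(s)S(t - s)x - S(s)x|| <= L ||S(t - s)x - x||
   <= L M (t - s)] for small [t - s], and large steps are controlled by the
   uniform bound. *)

From HB Require Import structures.
From mathcomp Require Import all_boot all_order all_algebra.
From mathcomp Require Import all_classical all_reals all_analysis.
From mathcomp Require Import ring lra.
Import Order.TTheory GRing.Theory Num.Theory.
Import numFieldNormedType.Exports.
Local Open Scope ring_scope.
Local Open Scope classical_set_scope.

Lemma scaler_half_double (R : numFieldType) (V : lmodType R) (v : V) :
  (2 : R)^-1 *: (v + v) = v.
Proof.
have two_halves : (2 : R)^-1 *+ 2 = 1 by rewrite -mulr_natr; field.
by rewrite scalerDr -scalerDl -mulr2n two_halves scale1r.
Qed.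

Section BanachLatticeTheory.
Context {R : realType} {X : completeNormedModType R} (BL : banach_lattice X).
Local Notation "x <=L y" := (bl_le BL x y) (at level 70).

Definition bl_abs (x : X) : X := bl_join BL x (- x).

Lemma bl_le_add2 {a b c d : X} : a <=L b -> c <=L d -> a + c <=L b + d.
Proof.
move=> le_ab le_cd; apply: (bl_le_trans (bl_le_add c le_ab)).
by rewrite ![b + _]addrC; apply: bl_le_add.
Qed.

Lemma bl_abs_ge0 (x : X) : 0 <=L bl_abs x.
Proof.
have twice_ge0 : 0 <=L bl_abs x + bl_abs x.
  by rewrite -(subrr x); apply: bl_le_add2; [apply: bl_join_ubl|apply: bl_join_ubr].
have half_ge0 : 0 <= (2 : R)^-1 by rewrite invr_ge0.
have := bl_le_scale half_ge0 twice_ge0.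
by rewrite scaler0 scaler_half_double.
Qed.

Lemma bl_norm_abs (x : X) : `|bl_abs x| = `|x|.
Proof.
apply/eqP; rewrite eq_le; apply/andP; split; apply: bl_norm_mono.
- apply: bl_join_lub; first exact: bl_le_refl.
  apply: (bl_le_trans _ (bl_abs_ge0 x)).
  by have := bl_le_add (- bl_abs x) (bl_abs_ge0 x); rewrite add0r subrr.
- exact: bl_join_ubl.
Qed.

Lemma bl_norm_le_of_bounds {a u v : X} :
  a <=L u -> - a <=L v -> `|a| <= `|u| + `|v|.
Proof.
move=> le_au le_av.
have abs_le : bl_abs a <=L bl_abs u + bl_abs v.
  apply: bl_join_lub.
  - apply: (bl_le_trans le_au).
    by have := bl_le_add2 (bl_join_ubl BL u (- u)) (bl_abs_ge0 v); rewrite addr0.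
  - apply: (bl_le_trans le_av).
    by have := bl_le_add2 (bl_abs_ge0 u) (bl_join_ubl BL v (- v)); rewrite add0r.
have : `|a| <= `|bl_abs u + bl_abs v|.
  apply: bl_norm_mono; apply: (bl_le_trans abs_le); exact: bl_join_ubl.
move/le_trans; apply; apply: (le_trans (ler_normD _ _)).
by rewrite !bl_norm_abs.
Qed.

End BanachLatticeTheory.

Section ConvexOperator.
Context {R : realType} {X : completeNormedModType R} {BL : banach_lattice X}.
Local Notation "x <=L y" := (bl_le BL x y) (at level 70).
Context {T : X -> X} (T_convex : convex_op BL T).

Lemma convex_op_midpoint (a b : X) :
  T ((2 : R)^-1 *: (a + b)) <=L (2 : R)^-1 *: (T a + T b).
Proof.
have half_in01 : 0 <= (2 : R)^-1 <= 1 by apply/andP; split; lra.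
have one_sub_half : 1 - (2 : R)^-1 = 2^-1 by field.
by have := T_convex a b _ half_in01; rewrite one_sub_half -!scalerDr.
Qed.

(* [c] is the midpoint of [z] and of its reflection [c + c - z] through [c]. *)
Lemma convex_op_reflect (c z : X) : - T z <=L T (c + c - z) - (T c + T c).
Proof.
have := convex_op_midpoint z (c + c - z).
rewrite addrC subrK scaler_half_double => /(bl_le_scale (ler0n R 2)).
rewrite scalerA mulfV ?pnatr_eq0 // scale1r scaler_nat mulr2n.
move/(bl_le_add (- T z - (T c + T c))).
by rewrite addrCA subrr addr0 [T z + _]addrC addrA addrK.
Qed.

Lemma convex_op_sub_le (y1 y2 : X) (l : R) : 0 < l <= 1 ->
  T y1 - T y2 <=L l *: (T (y2 + l^-1 *: (y1 - y2)) - T y2).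
Proof.
case/andP=> l_gt0 l_le1.
set w := y2 + l^-1 *: (y1 - y2).
have y1E : l *: w + (1 - l) *: y2 = y1.
  rewrite /w scalerDr scalerA mulfV ?gt_eqF // scale1r scalerBl scale1r.
  by rewrite addrC addrA subrK addrC subrK.
have := T_convex w y2 l; rewrite y1E ltW //= => /(_ l_le1).
move/(bl_le_add (- T y2)).
by rewrite scalerBl scale1r scalerBr [T y2 - _]addrC addrA addrK.
Qed.

Lemma convex_op_lipschitz {c : X} {r K : R} : 0 < r ->
  (forall z, `|z - c| <= r -> `|T z| <= K) ->
  forall y1 y2, `|y1 - c| <= r / 2 -> `|y2 - c| <= r / 2 ->
  `|T y1 - T y2| <= 8 * K / r * `|y1 - y2|.
Proof.
move=> r_gt0 T_le_K y1 y2 y1c y2c.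
have K_ge0 : 0 <= K.
  by apply: le_trans (normr_ge0 (T c)) (T_le_K c _); rewrite subrr normr0 ltW.
have half_r_le : r / 2 <= r by lra.
set d := `|y1 - y2|.
have [d_eq0|d_neq0] := eqVneq d 0.
  have y12 : y1 = y2 by apply/eqP; rewrite -subr_eq0 -normr_eq0 -/d d_eq0.
  by rewrite d_eq0 mulr0 y12 subrr normr0.
have d_gt0 : 0 < d by rewrite lt_neqAle eq_sym d_neq0 normr_ge0.
have [d_big|d_small] := leP (r / 2) d.
  apply: (le_trans (ler_normB _ _)).
  have -> : 8 * K / r * d = 4 * K * (d / (r / 2)) by field; rewrite gt_eqF.
  have : 1 <= d / (r / 2) by rewrite ler_pdivlMr ?mul1r // divr_gt0.
  have : `|T y1| <= K by apply/T_le_K/(le_trans y1c).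
  have : `|T y2| <= K by apply/T_le_K/(le_trans y2c).
  nra.
set l := d / (r / 2).
have l_in01 : 0 < l <= 1.
  by rewrite divr_gt0 ?divr_gt0 //= ler_pdivrMr ?divr_gt0 // mul1r ltW.
(* Stretching [a - b] by [l^-1] lands on the sphere of radius [r / 2] around [b]. *)
have stretch_le (a b : X) : `|b - c| <= r / 2 -> `|a - b| = d ->
    `|T (b + l^-1 *: (a - b)) - T b| <= K + K.
  move=> bc ab_d; apply: (le_trans (ler_normB _ _)); apply: lerD; apply: T_le_K.
    rewrite addrAC; apply: (le_trans (ler_normD _ _)).
    have -> : `|l^-1 *: (a - b)| = r / 2.
      rewrite normrZ ab_d gtr0_norm ?invr_gt0 ?(andP l_in01).1 // /l.
      by field; rewrite gt_eqF.
    lra.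
  exact: le_trans half_r_le.
have le12 := convex_op_sub_le y1 y2 _ l_in01.
have le21 := convex_op_sub_le y2 y1 _ l_in01; rewrite -opprB in le21.
apply: le_trans (bl_norm_le_of_bounds _ le12 le21) _.
rewrite 2!(normrZ l) (gtr0_norm (andP l_in01).1) -mulrDr.
have -> : 8 * K / r * d = l * (4 * K) by rewrite /l; field; rewrite gt_eqF.
apply: ler_wpM2l; first exact: ltW (andP l_in01).1.
have := stretch_le y1 y2 y2c erefl.
have := stretch_le y2 y1 y1c (distrC y2 y1).
lra.
Qed.

Lemma bounded_convex_op_continuous : bounded_op T -> continuous T.
Proof.
move=> T_bounded y.
have [K T_le_K] := T_bounded (`|y| + 1) (ltr_pwDr ltr01 (normr_ge0 y)).
have T_le_K_near z : `|z - y| <= 1 -> `|T z| <= K.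
  move=> zy; apply: T_le_K; rewrite -(subrK y z).
  by apply: le_trans (ler_normD _ _) _; rewrite addrC lerD.
have K_ge0 : 0 <= K.
  by apply: le_trans (normr_ge0 (T y)) (T_le_K_near y _); rewrite subrr normr0.
apply/cvgrPdist_le => e e_gt0; apply/nbhs_ballP.
exists (Num.min (2^-1) (e / (8 * K + 1))).
  by rewrite /= lt_min invr_gt0 ltr0n divr_gt0 //; lra.
move=> z; rewrite -ball_normE /= lt_min => /andP[yz_half yz_e].
have := convex_op_lipschitz ltr01 T_le_K_near y z.
rewrite subrr normr0 distrC divr1 => /(_ ltac:(lra) ltac:(lra)).
have : `|y - z| * (8 * K + 1) < e by rewrite -ltr_pdivlMr //; lra.
have := normr_ge0 (y - z); nra.
Qed.

End ConvexOperator.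

Section ConvexUniformBoundedness.
Context {R : realType} {X : completeNormedModType R} {BL : banach_lattice X}.
Local Notation "x <=L y" := (bl_le BL x y) (at level 70).
Context {F : set (X -> X)}.
Hypotheses (F_convex : forall {f}, F f -> convex_op BL f)
  (F_bounded : forall {f}, F f -> bounded_op f) (F_pointwise : pointwise_bounded F).

Lemma convex_family_bounded_on_ball :
  exists y0 r m, 0 < r /\ forall f y, F f -> `|y0 - y| < r -> `|f y| <= m.
Proof.
pose O (n : nat) := \bigcup_(f in F) [set y | n%:R < `|f y|].
have O_open n : open (O n).
  apply: bigcup_open => f Ff.
  apply: (@open_comp _ _ (Num.norm \o f) [set s | n%:R < s]); last exact: open_gt.
  move=> y _; apply: continuous_comp; last exact: norm_continuous.
  exact: bounded_convex_op_continuous (F_convex Ff) (F_bounded Ff) y.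
have [n O_not_dense] : exists n, ~ dense (O n).
  apply/existsNP => O_dense.
  have [|y [_ O_y]] := Baire (fun n => conj (O_open n) (O_dense n)) _ openT.
    by exists 0.
  have [M f_le_M] := F_pointwise y.
  have [f Ff M_lt] := O_y (Num.truncn M).+1 I.
  have := truncnS_gt M; have := f_le_M f Ff; rewrite /= in M_lt; lra.
have [U [[y0 [U_open U_y0]] UO_empty]] := denseNE O_not_dense.
have /nbhs_ballP[r r_gt0 ball_U] : nbhs y0 U by apply: open_nbhs_nbhs.
exists y0, r, n%:R; split => // f y Ff y0y.
rewrite leNgt; apply/negP => n_lt; suff : (U `&` O n) y by rewrite UO_empty.
by split; [apply: ball_U; rewrite -ball_normE | exists f].
Qed.

(* Convexity transports the bound from the ball around [y0] to any point [c]: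
   above by writing [w] as the midpoint of a point of that ball and the fixed
   point [c + c - y0], below by reflecting through [c]. *)
Lemma convex_family_locally_bounded (c : X) :
  exists rho K, 0 < rho /\ forall f z, F f -> `|z - c| <= rho -> `|f z| <= K.
Proof.
have [y0 [r [m [r_gt0 f_le_m]]]] := convex_family_bounded_on_ball.
pose p := c + c - y0.
have [Mp f_le_Mp] := F_pointwise p.
have [Mc f_le_Mc] := F_pointwise c.
pose b w := y0 + ((w - c) + (w - c)).
pose up (f : X -> X) w := (2 : R)^-1 *: (f (b w) + f p).
have up_spec f w : F f -> `|w - c| <= r / 4 -> f w <=L up f w /\ `|up f w| <= m + Mp.
  move=> Ff wc; split.
    have wE : (2 : R)^-1 *: (b w + p) = w.
      by rewrite /b /p addrC addrA subrK addrACA [c + _]addrC subrK scaler_half_double.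
    by rewrite /up -{1}wE; apply: convex_op_midpoint (F_convex Ff) _ _.
  have f_b_le : `|f (b w)| <= m.
    apply: f_le_m => //; rewrite /b opprD addrA subrr add0r normrN.
    by apply: le_lt_trans (ler_normD _ _) _; lra.
  rewrite /up normrZ gtr0_norm ?invr_gt0 //.
  have := ler_normD (f (b w)) (f p); have := normr_ge0 (f (b w) + f p).
  have := f_le_Mp f Ff; lra.
exists (r / 4), (m + Mp + (m + Mp + (Mc + Mc))); split => [|f z Ff zc]; first lra.
have zc' : `|c + c - z - c| <= r / 4 by rewrite addrAC addrK -normrN opprB.
have [z_le up_z_le] := up_spec f z Ff zc.
have [z'_le up_z'_le] := up_spec f _ Ff zc'.
have Nz_le : - f z <=L up f (c + c - z) - (f c + f c).
  apply: bl_le_trans (convex_op_reflect (F_convex Ff) c z) _.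
  exact: bl_le_add z'_le.
apply: le_trans (bl_norm_le_of_bounds _ z_le Nz_le) _; apply: lerD => //.
apply: le_trans (ler_normB _ _) _; apply: lerD => //.
by apply: le_trans (ler_normD _ _) _; apply: lerD; apply: f_le_Mc.
Qed.

End ConvexUniformBoundedness.

Section ConvexC0Semigroup.
Context {R : realType} {X : completeNormedModType R} {BL : banach_lattice X}.
Context {S : R -> X -> X} (S_semigroup : convex_C0_semigroup BL S).

Let S_convex t : 0 <= t -> convex_op BL (S t).
Proof. by case: S_semigroup => S_op _ _ _ /S_op[]. Qed.

Let S_bounded t : 0 <= t -> bounded_op (S t).
Proof. by case: S_semigroup => S_op _ _ _ /S_op[]. Qed.

Let S0 y : S 0 y = y.
Proof. by case: S_semigroup. Qed.

Let SD t s y : 0 <= t -> 0 <= s -> S (t + s) y = S t (S s y).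
Proof. by case: S_semigroup => _ _ SD _; apply: SD. Qed.

Let S_cvg0 y : S t y @[t --> 0^'+] --> y.
Proof. by case: S_semigroup. Qed.

Lemma semigroup_cvg_seq {t : nat -> R} (y : X) : (forall n, 0 <= t n) ->
  t n @[n --> \oo] --> 0 -> S (t n) y @[n --> \oo] --> y.
Proof.
move=> t_ge0 t_cvg; apply/cvgrPdist_lt => e e_gt0.
have /cvgrPdist_lt/(_ e e_gt0) := S_cvg0 y.
rewrite near_withinE => /nbhs_ballP[d d_gt0 S_near].
near=> n; have [->|tn_neq0] := eqVneq (t n) 0; first by rewrite S0 subrr normr0.
apply: S_near; last by rewrite lt_neqAle eq_sym tn_neq0 t_ge0.
by rewrite -ball_normE /=; near: n; apply: cvgr_dist_lt.
Unshelve. all: by end_near. Qed.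

Lemma semigroup_bounded_near0 (x : X) : exists d rho K, 0 < d /\ 0 < rho /\
  forall t z, 0 <= t <= d -> `|z - x| <= rho -> `|S t z| <= K.
Proof.
apply: contrapT => no_bound.
have bad n : exists tz : R * X, [/\ 0 <= tz.1 <= n.+1%:R^-1,
    `|tz.2 - x| <= n.+1%:R^-1 & n%:R < `|S tz.1 tz.2|].
  apply: contrapT => not_bad; apply: no_bound.
  exists n.+1%:R^-1, n.+1%:R^-1, n%:R; rewrite invr_gt0 ltr0n.
  split => //; split => // t z t_le z_le.
  by rewrite leNgt; apply/negP => lt_n; apply: not_bad; exists (t, z).
have [tz tz_bad] := choice bad.
pose F := [set S (tz n).1 | n in [set: nat]].
have t_ge0 n : 0 <= (tz n).1 by case: (tz_bad n) => /andP[].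
have F_convex f : F f -> convex_op BL f by case=> n _ <-; apply: S_convex.
have F_bounded f : F f -> bounded_op f by case=> n _ <-; apply: S_bounded.
have F_pointwise : pointwise_bounded F.
  move=> y; have t_cvg : (tz n).1 @[n --> \oo] --> 0.
    apply: (squeeze_cvgr _ (cvg_cst 0) cvg_harmonic).
    by near=> n; case: (tz_bad n).
  have := cvg_seq_bounded (cvgP _ (semigroup_cvg_seq y t_ge0 t_cvg)).
  case/(@ex_bound nat R X _ _ (@globally_properfilter nat setT 0%N I)) => M S_le_M.
  by exists M => _ [n _ <-]; apply: S_le_M.
have [rho [K [rho_gt0 F_le_K]]] :=
  convex_family_locally_bounded F_convex F_bounded F_pointwise x.
have [n [n_rho K_n]] : exists n : nat, n.+1%:R^-1 < rho /\ K < n%:R.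
  apply: (@filter_ex _ \oo); near=> n; split; near: n.
    exact: near_infty_natSinv_lt (PosNum rho_gt0).
  exact: nbhs_infty_gtr.
case: (tz_bad n) => _ z_near S_large.
have := F_le_K _ (tz n).2 (ex_intro2 _ _ n I erefl) (le_trans z_near (ltW n_rho)).
lra.
Unshelve. all: by end_near. Qed.

(* Write [S t = S d \o S (t - d)] and use that [S d] is bounded on bounded sets. *)
Lemma semigroup_bound_on_interval {B : set X} {d K : R} : 0 < d ->
  (forall t z, 0 <= t <= d -> B z -> `|S t z| <= K) ->
  forall T, exists K', forall t z, 0 <= t <= T -> B z -> `|S t z| <= K'.
Proof.
move=> d_gt0 S_le_K T.
suff bound_n n : exists K', forall t z, 0 <= t <= n%:R * d -> B z -> `|S t z| <= K'.
  have [K' S_le_K'] := bound_n (Num.truncn (T / d)).+1.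
  exists K' => t z /andP[t_ge0 t_le] Bz; apply: S_le_K' => //.
  rewrite t_ge0 (le_trans t_le) // -ler_pdivrMr //.
  exact/ltW/truncnS_gt.
elim: n => [|n [Kn S_le_Kn]].
  exists K => t z /andP[t_ge0 t_le] Bz; apply: S_le_K => //.
  by rewrite t_ge0 (le_trans t_le) // mul0r ltW.
have [M Sd_le_M] := S_bounded _ (ltW d_gt0) _ (ltr_pwDr ltr01 (normr_ge0 Kn)).
exists (Num.max K M) => t z /andP[t_ge0 t_le] Bz; rewrite le_max.
have [t_le_d|d_lt_t] := leP t d; first by rewrite S_le_K ?t_ge0.
have td_ge0 : 0 <= t - d by rewrite subr_ge0 ltW.
have -> : t = d + (t - d) by rewrite addrC subrK.
rewrite SD ?(ltW d_gt0) //; apply/orP; right; apply: Sd_le_M.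
have : `|S (t - d) z| <= Kn.
  apply: S_le_Kn => //; rewrite td_ge0 /=.
  by rewrite -natr1 mulrDl mul1r in t_le; lra.
have := ler_norm Kn; lra.
Qed.

Lemma semigroup_locally_bounded (x : X) (T : R) : exists rho K, 0 < rho /\
  forall t z, 0 <= t <= T -> `|z - x| <= rho -> `|S t z| <= K.
Proof.
have [d [rho [K [d_gt0 [rho_gt0 S_le_K]]]]] := semigroup_bounded_near0 x.
have [K' S_le_K'] := semigroup_bound_on_interval d_gt0 S_le_K T.
by exists rho, K'.
Qed.

Lemma semigroup_increment_le {x : X} {h0 M : R} :
  (forall h, 0 < h <= h0 -> `|h^-1 *: (S h x - x)| <= M) ->
  forall k, 0 <= k <= h0 -> `|S k x - x| <= k * M.
Proof.
move=> quot_le_M k /andP[k_ge0 k_le_h0].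
have [->|k_neq0] := eqVneq k 0; first by rewrite S0 subrr normr0 mul0r.
have k_gt0 : 0 < k by rewrite lt_neqAle eq_sym k_neq0.
have := quot_le_M k; rewrite k_gt0 k_le_h0 => /(_ isT).
by rewrite normrZ gtr0_norm ?invr_gt0 // -ler_pdivlMl ?invr_gt0 // invrK.
Qed.

Lemma semigroup_locally_lipschitz (x : X) (T : R) : exists rho L, 0 < rho /\ 0 <= L /\
  forall t y1 y2, 0 <= t <= T -> `|y1 - x| <= rho -> `|y2 - x| <= rho ->
  `|S t y1 - S t y2| <= L * `|y1 - y2|.
Proof.
have [rho [K [rho_gt0 S_le_K]]] := semigroup_locally_bounded x T.
exists (rho / 2), (8 * `|K| / rho); split; first by rewrite divr_gt0.
split; first by rewrite !mulr_ge0 // invr_ge0 ltW.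
move=> t y1 y2 /[dup] /andP[t_ge0 _] t_in.
apply: (convex_op_lipschitz (S_convex _ t_ge0) rho_gt0).
by move=> z zx; apply: le_trans (S_le_K t z t_in zx) (ler_norm K).
Qed.

End ConvexC0Semigroup.

Lemma lipschitz_of_small_increments {R : realType} {V : normedModType R}
    (f : R -> V) {T h L K : R} : 0 < h -> 0 <= L ->
  (forall t, 0 <= t <= T -> `|f t| <= K) ->
  (forall s t, 0 <= s -> s <= t <= T -> t - s <= h -> `|f t - f s| <= L * (t - s)) ->
  exists L', 0 <= L' /\ forall s t, 0 <= s <= T -> 0 <= t <= T ->
    `|f t - f s| <= L' * `|t - s|.
Proof.
move=> h_gt0 L_ge0 f_le_K f_step.
have c_ge0 : 0 <= 2 * `|K| / h by rewrite !mulr_ge0 // invr_ge0 ltW.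
have ordered s t : 0 <= s -> s <= t <= T ->
    `|f t - f s| <= (L + 2 * `|K| / h) * (t - s).
  move=> s_ge0 /andP[st tT]; have ts_ge0 : 0 <= t - s by rewrite subr_ge0.
  have [small|big] := leP (t - s) h.
    apply: le_trans (f_step s t s_ge0 _ small) _; first by rewrite st.
    by rewrite ler_wpM2r // lerDl.
  have f_le_normK u : 0 <= u <= T -> `|f u| <= `|K|.
    by move=> u_in; apply: le_trans (f_le_K u u_in) (ler_norm K).
  have := f_le_normK s; have := f_le_normK t; rewrite s_ge0 tT (le_trans st tT).
  rewrite (le_trans s_ge0 st) /= => /(_ isT) ft /(_ isT) fs.
  have c_large : 2 * `|K| <= 2 * `|K| / h * (t - s).
    by rewrite -mulrA [h^-1 * _]mulrC ler_peMr ?mulr_ge0 // ler_pdivlMr // mul1r ltW.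
  have := ler_normB (f t) (f s); have := mulr_ge0 L_ge0 ts_ge0.
  rewrite mulrDl; lra.
exists (L + 2 * `|K| / h); split => [|s t /andP[s_ge0 sT] /andP[t_ge0 tT]].
  exact: addr_ge0.
have [st|ts] := leP s t.
  by rewrite (ger0_norm (x := t - s)) ?subr_ge0 // ordered ?st.
by rewrite distrC (ltr0_norm (x := t - s)) ?subr_lt0 // opprB ordered ?(ltW ts).
Qed.

Theorem proposition2p7 (R : realType) (X : completeNormedModType R)
  (BL : banach_lattice X) (S : R -> X -> X) (x : X) :
  convex_C0_semigroup BL S ->
  (exists h0 : R, 0 < h0 /\ exists M : R,
     forall h : R, 0 < h <= h0 -> `|h^-1 *: (S h x - x)| <= M) ->
  forall T : R, 0 < T -> exists L : R, 0 <= L /\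
    forall s t : R, 0 <= s <= T -> 0 <= t <= T ->
      `|S t x - S s x| <= L * `|t - s|.
Proof.
move=> S_semigroup [h0 [h0_gt0 [M quot_le_M]]] T T_gt0.
have [_ _ SD _] := S_semigroup.
have [rho [L [rho_gt0 [L_ge0 S_lip]]]] := semigroup_locally_lipschitz S_semigroup x T.
have [rho' [K [rho'_gt0 S_le_K]]] := semigroup_locally_bounded S_semigroup x T.
have M_ge0 : 0 <= M by apply: le_trans (quot_le_M h0 _); rewrite ?h0_gt0 ?lexx.
pose h := Num.min h0 (rho / (M + 1)).
have h_gt0 : 0 < h by rewrite lt_min h0_gt0 divr_gt0 //; lra.
have hM_le : h * (M + 1) <= rho by rewrite -ler_pdivlMr ?ge_min ?lexx ?orbT //; lra.
apply: (lipschitz_of_small_increments (S^~ x) h_gt0 (mulr_ge0 L_ge0 M_ge0)).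
  by move=> t t_in; apply: S_le_K t_in _; rewrite subrr normr0 ltW.
move=> s t s_ge0 /andP[st tT] ts_h.
have step_le : `|S (t - s) x - x| <= (t - s) * M.
  apply: (semigroup_increment_le S_semigroup quot_le_M).
  by rewrite subr_ge0 st (le_trans ts_h) ?ge_min ?lexx.
have step_rho : `|S (t - s) x - x| <= rho by apply: le_trans step_le _; nra.
have -> : S t x = S s (S (t - s) x) by rewrite -SD ?subr_ge0 // addrC subrK.
apply: le_trans (S_lip s _ x _ step_rho _) _.
- by rewrite s_ge0 (le_trans st tT).
- by rewrite subrr normr0 ltW.
by rewrite -mulrA [M * _]mulrC ler_wpM2l.
Qed.
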